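(* Let $m,k$ be positive integers and let $\mu_1,\dots,\mu_k\in\{0,1\}^m$ be random vectors whose entries are independent fair coin flips. Let $\beta=m/(k2^k)$. Then, with probability at least $1-2^{(1-\beta)k}$, the following non-degeneracy condition holds: whenever $\tau\in\{0,1\}^m$ has the property that for all $x,y,z\in\{1,\dots,m\}$ there exists some $i$ with $\tau(x)=\mu_i(x)$, $\tau(y)=\mu_i(y)$ and $\tau(z)=\mu_i(z)$, then $\tau=\mu_j$ for some $j\in\{1,\dots,k\}$. *)

From HB Require Import structures.
From mathcomp Require Import all_boot all_order all_algebra.
From mathcomp Require Import all_classical all_reals exp.
Set Implicit Arguments. Unset Strict Implicit. Unset Printing Implicit Defensive.
Import Order.TTheory GRing.Theory Num.Theory.

Definition config (m k : nat) := {ffun 'I_k -> {ffun 'I_m -> bool}}.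

Definition nondegenerate (m k : nat) (mu : config m k) : bool :=
  [forall tau : {ffun 'I_m -> bool},
     [forall x : 'I_m, forall y : 'I_m, forall z : 'I_m,
        exists i : 'I_k,
          [&& tau x == mu i x, tau y == mu i y & tau z == mu i z]]
     ==> [exists j : 'I_k, tau == mu j]].

(* Probability under independent fair coin flips = uniform distribution on
   configurations: proportion of good configurations. *)
Definition prob_nondeg (R : realType) (m k : nat) : R :=
  (#|[set mu : config m k | nondegenerate mu]|%:R / #|{: config m k}|%:R)%R.

From Pilot Require Import Defs.
From mathcomp Require Import all_boot all_order all_algebra.
From mathcomp Require Import reals sequences exp.
From mathcomp Require Import ring lra.
Import Order.TTheory GRing.Theory Num.Theory.

Set Implicit Arguments. Unset Strict Implicit. Unset Printing Implicit Defensive.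

(* Read mu as a k x m 0/1 matrix. If all 2^k possible columns occur, mu is
   non-degenerate: for a tau as in the statement, the columns on which tau is 0
   are closed under union (three coordinates x, y, z with col x = col y U col z
   leave no row to agree with tau), so tau cannot be 0 on every singleton
   column, as the all-ones column would follow; a singleton column {i} with tau = 1
   then forces tau = mu_i coordinatewise. A fixed column is missing with
   probability (1 - 2^-k)^m <= 2^(-m/2^k), and the union bound over the 2^k
   columns gives failure probability at most 2^k 2^(-m/2^k) = 2^((1 - beta) k). *)

Definition column (m k : nat) (mu : config m k) (x : 'I_m) : {set 'I_k} :=
  [set i | mu i x].

Definition full_columns (m k : nat) (mu : config m k) : bool :=
  [forall S : {set 'I_k}, exists x, column mu x == S].

Lemma in_column (m k : nat) (mu : config m k) x i : (i \in column mu x) = mu i x.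
Proof. by rewrite inE. Qed.

Section NondegenerateFullColumns.

Variables (m k : nat) (mu : config m k) (tau : {ffun 'I_m -> bool}).
Hypothesis agree3 : forall x y z : 'I_m,
  exists i, [&& tau x == mu i x, tau y == mu i y & tau z == mu i z].

Lemma agree1 x : exists i, tau x = (i \in column mu x).
Proof.
by have [i /and3P[/eqP-> _ _]] := agree3 x x x; exists i; rewrite in_column.
Qed.

Lemma tau_false_column_subU x y z :
  column mu x \subset column mu y :|: column mu z ->
  ~~ tau y -> ~~ tau z -> ~~ tau x.
Proof.
move=> /subsetP sub_xyz ty tz; apply/negP => tx.
have [i /and3P[/eqP txi /eqP tyi /eqP tzi]] := agree3 x y z.
have /sub_xyz : i \in column mu x by rewrite in_column -txi.
by rewrite !inE -tyi -tzi (negbTE ty) (negbTE tz).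
Qed.

Hypothesis full : full_columns mu.

Lemma column_surj (S : {set 'I_k}) : exists x, column mu x = S.
Proof. by have /existsP[x /eqP<-] := forallP full S; exists x. Qed.

Lemma tau_singleton_column : exists x i, column mu x = [set i] /\ tau x.
Proof.
pose false_on S := forall x, column mu x = S -> ~~ tau x.
have [/existsP[x /andP[/cards1P[i col_x] tx]] | no_single] :=
  boolP [exists x, (#|column mu x| == 1%N) && tau x].
  by exists x, i.
have false_on_set1 i : false_on [set i].
  move=> x col_x; apply: contra no_single => tx.
  by apply/existsP; exists x; rewrite col_x cards1 eqxx.
have false_on_set0 : false_on set0.
  by move=> x col_x; have [i ->] := agree1 x; rewrite col_x inE.
have false_onU A B : false_on A -> false_on B -> false_on (A :|: B).
  move=> fA fB x col_x; have [y col_y] := column_surj A.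
  have [z col_z] := column_surj B.
  apply: tau_false_column_subU (fA y col_y) (fB z col_z).
  by rewrite col_x col_y col_z.
have setT_bigcup : [set: 'I_k] = \bigcup_i [set i].
  by apply/setP => j; rewrite inE; apply/esym/bigcupP; exists j; rewrite ?inE.
have false_onT : false_on [set: 'I_k].
  by rewrite setT_bigcup; apply: big_ind => // i _; apply: false_on_set1.
have [x col_x] := column_surj [set: 'I_k].
have [i tx] := agree1 x.
by have := false_onT x col_x; rewrite tx col_x inE.
Qed.

Lemma tau_eq_mu : exists j, tau = mu j.
Proof.
have [y [i [col_y ty]]] := tau_singleton_column.
exists i; apply/ffunP => x.
have [j /and3P[/eqP-> /eqP tyj _]] := agree3 x y y.
suff -> : j = i by [].
by apply/set1P; rewrite -col_y in_column -tyj.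
Qed.

End NondegenerateFullColumns.

Lemma full_columns_nondegenerate (m k : nat) (mu : config m k) :
  full_columns mu -> Defs.nondegenerate mu.
Proof.
move=> full; apply/forallP => tau; apply/implyP => /forallP agree.
have agree3 x y z :
    exists i, [&& tau x == mu i x, tau y == mu i y & tau z == mu i z].
  by apply/existsP; move: (agree x) => /forallP/(_ y)/forallP/(_ z).
by have [j ->] := tau_eq_mu agree3 full; apply/existsP; exists j.
Qed.

Lemma card_set (T : finType) : #|{set T}| = 2 ^ #|T|.
Proof. by rewrite -[#|T|]cardsT -card_powerset powersetT cardsT. Qed.

Lemma card_config (m k : nat) : #|{: config m k}| = (2 ^ k) ^ m.
Proof. by rewrite !card_ffun card_bool !card_ord -!expnM mulnC. Qed.

Lemma leq_card_bigcup (I T : finType) (F : I -> {set T}) :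
  (#|\bigcup_i F i| <= \sum_i #|F i|)%N.
Proof.
elim/big_rec2: _ => [|i n A _ IH]; first by rewrite cards0.
by apply: leq_trans (leq_card_setU _ _) _; rewrite leq_add2l.
Qed.

Section Counting.

Variables m k : nat.

Definition columns (mu : config m k) : {ffun 'I_m -> {set 'I_k}} :=
  [ffun x => column mu x].

Lemma columns_inj : injective columns.
Proof.
move=> mu1 mu2 eq_cols; apply/ffunP => i; apply/ffunP => x.
by rewrite -!in_column -!(ffunE (column _)) -/(columns _) eq_cols.
Qed.

Lemma card_avoid_column (S : {set 'I_k}) :
  (#|[set mu : config m k | [forall x, column mu x != S]]| <= (2 ^ k).-1 ^ m)%N.
Proof.
have <- : #|(ffun_on (predC1 S) : {pred {ffun 'I_m -> _}})| = (2 ^ k).-1 ^ m.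
  by rewrite card_ffun_on cardC1 card_set !card_ord.
rewrite -(card_imset _ columns_inj).
apply/subset_leq_card/subsetP => _ /imsetP[mu + ->]; rewrite inE => /forallP avoid.
by apply/ffun_onP => x; rewrite ffunE !inE avoid.
Qed.

Lemma card_not_full_columns :
  (#|[set mu : config m k | ~~ full_columns mu]| <= 2 ^ k * (2 ^ k).-1 ^ m)%N.
Proof.
pose avoid S := [set mu : config m k | [forall x, column mu x != S]].
have -> : [set mu | ~~ full_columns mu] = \bigcup_S avoid S.
  apply/setP => mu; rewrite inE negb_forall; apply/existsP/bigcupP.
    by move=> [S avoidS]; exists S; rewrite // inE -negb_exists.
  by move=> [S _]; rewrite inE -negb_exists; exists S.
apply: leq_trans (leq_card_bigcup _) _.
apply: (@leq_trans (\sum_(S : {set 'I_k}) (2 ^ k).-1 ^ m)).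
  by apply: leq_sum => S _; apply: card_avoid_column.
by rewrite sum_nat_const card_set card_ord.
Qed.

End Counting.

Local Open Scope ring_scope.

Section PowerBounds.

Variable R : realType.

Lemma ln2_le1 : ln (2 : R) <= 1.
Proof. by have := @le_ln1Dx R 1; rewrite -[1 + 1]/2; apply; lra. Qed.

Lemma onemX_le_powR2 (x : R) : 0 <= x -> 1 - x <= 2 `^ (- x).
Proof.
move=> x_ge0; rewrite /powR gt_eqF //.
apply: le_trans (expR_ge1Dx (- x)) _; rewrite ler_expR.
by rewrite mulNr lerN2 -[leRHS]mulr1 ler_wpM2l ?ln2_le1.
Qed.

Lemma onemX_expn_le_powR2 (x : R) (n : nat) :
  0 <= x <= 1 -> (1 - x) ^+ n <= 2 `^ (- (n%:R * x)).
Proof.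
case/andP=> x_ge0 x_le1.
rewrite mulrC -mulNr powRrM powR_mulrn ?powR_ge0 //.
by apply: lerXn2r; rewrite ?nnegrE ?powR_ge0 ?subr_ge0 ?onemX_le_powR2.
Qed.

End PowerBounds.

Lemma not_full_columns_ratio_le (R : realType) (m k : nat) : (0 < k)%N ->
  ((2 ^ k * (2 ^ k).-1 ^ m)%:R / ((2 ^ k) ^ m)%:R : R)
    <= 2 `^ ((1 - m%:R / (k%:R * 2 ^+ k)) * k%:R).
Proof.
move=> k_gt0; set q : R := 2 ^+ k.
have q_ge1 : 1 <= q by rewrite exprn_ege1 // ler1n.
have q_gt0 : 0 < q by apply: lt_le_trans q_ge1.
have -> : (1 - m%:R / (k%:R * q)) * k%:R = k%:R + - (m%:R * q^-1).
  by field; rewrite pnatr_eq0 -lt0n k_gt0 gt_eqF.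
rewrite powRD ?pnatr_eq0 ?implybT // powR_mulrn // -/q.
rewrite -subn1 natrM !natrX natrB ?expn_gt0 // natrX -/q.
rewrite -mulrA -expr_div_n mulrBl divff ?gt_eqF // mul1r ler_pM2l //.
by apply: onemX_expn_le_powR2; rewrite invr_ge0 invf_le1 // ltW.
Qed.

Lemma prob_nondeg_ge (R : realType) (m k : nat) :
  1 - (#|[set mu : config m k | ~~ full_columns mu]|%:R / #|{: config m k}|%:R : R)
    <= prob_nondeg R m k.
Proof.
have N_gt0 : (0 < #|{: config m k}|)%N.
  by apply/card_gt0P; exists [ffun => [ffun => true]].
set full := [set mu : config m k | full_columns mu].
have -> : [set mu | ~~ full_columns mu] = ~: full by apply/setP => mu; rewrite !inE.
rewrite /prob_nondeg lerBlDr -mulrDl ler_pdivlMr ?ltr0n // mul1r -natrD ler_nat.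
rewrite -(cardsC full) leq_add2r.
apply/subset_leq_card/subsetP => mu; rewrite !inE.
exact: full_columns_nondegenerate.
Qed.

Theorem proposition1 (R : realType) (m k : nat) (hm : (0 < m)%N) (hk : (0 < k)%N) :
  let beta : R := m%:R / (k%:R * 2 ^+ k) in
  1 - powR 2 ((1 - beta) * k%:R) <= prob_nondeg R m k.
Proof.
rewrite /=; apply: le_trans _ (prob_nondeg_ge R m k); apply: lerB => //.
apply: le_trans _ (not_full_columns_ratio_le R m hk).
rewrite card_config ler_pM2r ?invr_gt0 ?ltr0n ?expn_gt0 // ler_nat.
exact: card_not_full_columns.
Qed.
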